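(* Let $\Gamma=(G,\sigma)$, $G=(V,E)$, be a balanced signed graph, let $f:V\to\mathbb R$ be not identically zero, and let $\tau:V\to\{+1,-1\}$ be such that $\tau(x)\sigma_{xy}\tau(y)=+1$ for every edge $\{x,y\}\in E$. Then an induced subgraph of $G$ is a strong (respectively weak) nodal domain of $f$ on $\Gamma$ if and only if it is a strong (respectively weak) nodal domain, in the unsigned sense, of the function $\tau f$ ($(\tau f)(x)=\tau(x)f(x)$) on the graph $G$.
   Context: All graphs are finite, simple and undirected. A signed graph $\Gamma=(G,\sigma)$ is a graph $G=(V,E)$ with $\sigma:E\to\{+1,-1\}$; it is balanced if every cycle has positive sign (product of the signs of its edges). A walk is a sequence $y_1,\dots,y_m$ ($m\ge2$) with $y_j\sim y_{j+1}$. For $f:V\to\mathbb R$, $\Omega=\{x:f(x)\ne0\}$. An S-walk of $f$ is a walk with $f(y_j)\sigma_{y_jy_{j+1}}f(y_{j+1})>0$ for all $j$. A W-walk of $f$ is a walk such that for any two consecutive nonzeros $y_i,y_j$ ($i<j$, $f(y_l)=0$ for $i<l<j$) one has $f(y_i)\sigma_{y_iy_{i+1}}\cdots\sigma_{y_{j-1}y_j}f(y_j)>0$. On $\Omega$, $xR_Sy$ (resp. $xR_Wy$) iff $x=y$ or an S-walk (resp. W-walk) connects them. Strong nodal domains of $f$ on $\Gamma$: induced subgraphs on $R_S$-classes; weak nodal domains: for each $R_W$-class $W_i$, the induced subgraph on $W_i\cup\{x:\text{a W-walk joins } x \text{ to a vertex of } W_i\}$. Unsigned sense (for a graph $G$ and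 $g:V\to\mathbb R$): a positive (negative) strong nodal domain is a maximal connected induced subgraph on vertices with $g>0$ ($g<0$); a positive (negative) weak nodal domain is a maximal connected induced subgraph on vertices with $g\ge0$ ($g\le0$) containing at least one vertex where $g\ne0$. *)

From mathcomp Require Import all_boot all_order all_algebra.
Set Implicit Arguments. Unset Strict Implicit. Unset Printing Implicit Defensive.
Import Order.TTheory GRing.Theory Num.Theory.
Local Open Scope ring_scope.

(* A finite simple graph is a symmetric irreflexive relation [adj] on a finType
   [T]; a signing is [sigma : T -> T -> R], relevant only on edges (where it is
   symmetric and takes values +1/-1, hypotheses of the theorem).  An induced
   subgraph is identified with its vertex set [S : {set T}]. *)

Section Nodal.
Variables (R : realFieldType) (T : finType) (adj : rel T) (sigma : T -> T -> R).

Definition cycle_sign (c : seq T) : R :=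
  \prod_(e <- zip c (rot 1 c)) sigma e.1 e.2.

Definition balanced : Prop :=
  forall (x : T) (p : seq T), uniq (x :: p) -> (2 <= size p)%N ->
    cycle adj (x :: p) -> cycle_sign (x :: p) = 1.

Variable f : T -> R.

Definition S_walk (x : T) (p : seq T) : Prop :=
  p != [::] /\ path (fun a b => adj a b && (0 < f a * sigma a b * f b)) x p.

Definition W_walk (x : T) (p : seq T) : Prop :=
  let w := x :: p in
  [/\ p != [::], path adj x p &
  forall i j, (i < j < size w)%N ->
    f (nth x w i) != 0 -> f (nth x w j) != 0 ->
    (forall l, (i < l < j)%N -> f (nth x w l) = 0) ->
    0 < f (nth x w i) * (\prod_(i <= l < j) sigma (nth x w l) (nth x w l.+1))
          * f (nth x w j)].

Definition RS (x y : T) : Prop :=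
  [/\ f x != 0, f y != 0 & (x = y \/ exists p, S_walk x p /\ last x p = y)].

Definition RW (x y : T) : Prop :=
  [/\ f x != 0, f y != 0 & (x = y \/ exists p, W_walk x p /\ last x p = y)].

Definition strong_nodal_domain (S : {set T}) : Prop :=
  exists x, f x != 0 /\ forall y, y \in S <-> RS x y.

Definition weak_nodal_domain (S : {set T}) : Prop :=
  exists x, f x != 0 /\ forall y, y \in S <->
    (RW x y \/ exists p, W_walk y p /\ RW x (last y p)).

End Nodal.

Section Unsigned.
Variables (R : realFieldType) (T : finType) (adj : rel T).

Definition induced_connected (S : {set T}) : Prop :=
  S != set0 /\ forall x y, x \in S -> y \in S ->
    connect [rel a b | [&& adj a b, a \in S & b \in S]] x y.

Definition maximal_connected_in (P : pred T) (S : {set T}) : Prop :=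
  [/\ {subset S <= P}, induced_connected S &
      forall S' : {set T}, S \subset S' -> {subset S' <= P} ->
        induced_connected S' -> S' = S].

Variable g : T -> R.

Definition pos_strong_domain S := maximal_connected_in (fun x => 0 < g x) S.
Definition neg_strong_domain S := maximal_connected_in (fun x => g x < 0) S.
Definition pos_weak_domain S :=
  maximal_connected_in (fun x => 0 <= g x) S /\ exists x, x \in S /\ g x != 0.
Definition neg_weak_domain S :=
  maximal_connected_in (fun x => g x <= 0) S /\ exists x, x \in S /\ g x != 0.

Definition unsigned_strong_domain S := pos_strong_domain S \/ neg_strong_domain S.
Definition unsigned_weak_domain S := pos_weak_domain S \/ neg_weak_domain S.

End Unsigned.

From mathcomp Require Import all_boot all_order all_algebra.
From mathcomp Require Import zify ring lra.
Import Order.TTheory GRing.Theory Num.Theory.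
Set Implicit Arguments. Unset Strict Implicit. Unset Printing Implicit Defensive.
Local Open Scope ring_scope.

(* Since tau switches sigma to the all-positive signature, sigma_xy = tau x * tau y
   on every edge, so the product of the signs along a segment of a walk
   telescopes to tau at its two ends.  Hence, with g := tau * f, an S-walk is a
   walk along which g keeps a strict sign, and a W-walk one along which the
   nonzero values of g keep a sign.  Both kinds of nodal domains of f are
   therefore the connected components, around a vertex x with g x != 0, of the
   subgraphs induced on {a | 0 < g x * g a} and {a | 0 <= g x * g a}; and these
   are exactly the unsigned strong and weak nodal domains of g.  Balance is only
   needed for tau to exist. *)

Section InducedComponents.
Variables (T : finType) (adj : rel T).
Implicit Types (P : pred T) (S : {set T}).

Definition induced_adj P : rel T := fun a b => [&& adj a b, P a & P b].
Arguments induced_adj P a b /.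

Definition component (P : pred T) (x : T) : {set T} :=
  [set y | connect (induced_adj P) x y].

Lemma induced_path_all P x p : path (induced_adj P) x p -> all P p.
Proof. by elim: p x => //= a p IHp x /andP[/and3P[_ _ ->] /IHp]. Qed.

Lemma path_induced P x p :
  path adj x p -> all P (x :: p) -> path (induced_adj P) x p.
Proof.
elim: p x => //= a p IHp x /andP[xa pth] /and3P[Px Pa Pp].
by rewrite /= IHp /= ?Pa // andbT; apply/and3P.
Qed.

Lemma component_pred P x y : P x -> y \in component P x -> P y.
Proof.
rewrite /component => Px; rewrite inE => /connectP[p pth ->].
move: (mem_last x p); rewrite inE => /predU1P[-> // | ?].
exact: (allP (induced_path_all pth)).
Qed.

Lemma eq_component P P' x : P =1 P' -> component P x = component P' x.
Proof.
move=> eqP'; apply/setP => y; rewrite !inE.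
by apply: eq_connect => a b; rewrite /= !eqP'.
Qed.

Hypothesis adj_sym : symmetric adj.

Lemma induced_connect_sym P : connect_sym (induced_adj P).
Proof.
apply: sym_connect_sym => a b /=; rewrite adj_sym.
by case: (P a); case: (P b); rewrite ?andbF.
Qed.

Lemma component_sym P x y : y \in component P x -> x \in component P y.
Proof. by rewrite !inE induced_connect_sym. Qed.

Lemma component_trans P x y z :
  y \in component P x -> z \in component P y -> z \in component P x.
Proof. by rewrite !inE; apply: connect_trans. Qed.

Lemma path_in_component P x z p :
  z \in component P x -> path (induced_adj P) z p ->
  path (induced_adj (mem (component P x))) z p.
Proof.
elim: p z => //= a p IHp z xz /andP[za pth].
have xa : a \in component P x by apply: component_trans xz _; rewrite inE connect1.
by move: za => /and3P[za _ _]; rewrite /= za xz xa IHp.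
Qed.

Lemma component_connected P x : induced_connected adj (component P x).
Proof.
split; first by apply/set0Pn; exists x; rewrite inE connect0.
move=> y z xy xz; have /connectP[p pth ->] : connect (induced_adj P) y z.
  by rewrite -inE; apply: component_trans (component_sym xy) xz.
by apply/connectP; exists p => //; apply: path_in_component pth.
Qed.

Lemma connected_sub_component P S x :
  {subset S <= P} -> induced_connected adj S -> x \in S ->
  S \subset component P x.
Proof.
move=> SP [_ conS] xS; apply/subsetP => y yS; rewrite inE.
apply: connect_sub (conS x y xS yS) => a b /and3P[ab aS bS].
by apply/connect1/and3P; split; [| exact: SP aS | exact: SP bS].
Qed.

Lemma component_maximal P x : P x -> maximal_connected_in adj P (component P x).
Proof.
move=> Px; split; [by move=> y /(component_pred Px) | exact: component_connected |].
move=> S' sub S'P S'con; apply/eqP; rewrite eqEsubset sub andbT.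
by apply: connected_sub_component => //; apply: (subsetP sub); rewrite inE connect0.
Qed.

Lemma maximal_connected_component P S x :
  maximal_connected_in adj P S -> x \in S -> S = component P x.
Proof.
move=> [SP Scon Smax] xS; symmetry; apply: Smax.
- exact: connected_sub_component.
- by move=> y /(component_pred (SP x xS)).
- exact: component_connected.
Qed.

Lemma maximal_connected_componentP P S :
  maximal_connected_in adj P S <-> exists2 x, P x & S = component P x.
Proof.
split=> [Smax | [x Px ->]]; last exact: component_maximal.
have [SP [/set0Pn[x xS] _] _] := Smax.
by exists x; [apply: SP | apply: maximal_connected_component].
Qed.

End InducedComponents.

Section SignTransitivity.
Variable R : realDomainType.
Implicit Types a b c : R.

Lemma mulr_gt0_trans a b c : 0 < a * b -> 0 < b * c -> 0 < a * c.
Proof.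
case: (ltgtP b 0) => [b_lt0 | b_gt0 | ->]; last by rewrite mulr0 ltxx.
- rewrite (nmulr_lgt0 a b_lt0) (nmulr_rgt0 c b_lt0) => a_lt0 c_lt0.
  by rewrite (nmulr_rgt0 c a_lt0).
- rewrite (pmulr_lgt0 a b_gt0) (pmulr_rgt0 c b_gt0) => a_gt0 c_gt0.
  by rewrite (pmulr_rgt0 c a_gt0).
Qed.

Lemma mulr_gt0_ge0_trans a b c : 0 < a * b -> 0 <= b * c -> 0 <= a * c.
Proof.
case: (ltgtP b 0) => [b_lt0 | b_gt0 | ->]; last by rewrite mulr0 ltxx.
- rewrite (nmulr_lgt0 a b_lt0) (nmulr_rge0 c b_lt0) => a_lt0 c_le0.
  by rewrite (nmulr_rge0 c a_lt0).
- rewrite (pmulr_lgt0 a b_gt0) (pmulr_rge0 c b_gt0) => a_gt0 c_ge0.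
  by rewrite (pmulr_rge0 c a_gt0).
Qed.

Lemma mulr_ge0_pivot a b c : a != 0 -> 0 <= a * b -> 0 <= a * c -> 0 <= b * c.
Proof.
case: (ltgtP a 0) => [a_lt0 | a_gt0 | ->] // _.
- by rewrite (nmulr_rge0 b a_lt0) (nmulr_rge0 c a_lt0); apply: mulr_le0.
- by rewrite (pmulr_rge0 b a_gt0) (pmulr_rge0 c a_gt0); apply: mulr_ge0.
Qed.

Lemma consecutive_nonzero_mul_gt0 (G : nat -> R) n :
  (forall i j, (i < j < n)%N -> G i != 0 -> G j != 0 ->
     (forall l, (i < l < j)%N -> G l = 0) -> 0 < G i * G j) ->
  forall i j, (i < j < n)%N -> G i != 0 -> G j != 0 -> 0 < G i * G j.
Proof.
move=> Gcons i j; move: {2}(j - i)%N (leqnn (j - i)) => d.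
elim: d i j => [|d IHd] i j dij /andP[ij jn] Gi Gj; first lia.
case: (boolP [exists l : 'I_j, (i < l)%N && (G l != 0)]) => [|/existsPn between].
  move=> /existsP[[l lj] /= /andP[il Gl]].
  by apply: (@mulr_gt0_trans _ (G l)); apply: IHd => //; lia.
apply: Gcons => //; first by rewrite ij jn.
by move=> l /andP[il lj]; move: (between (Ordinal lj)); rewrite /= il negbK => /eqP.
Qed.

End SignTransitivity.

Section Switching.
Variables (R : realFieldType) (T : finType) (adj : rel T).
Variables (sigma : T -> T -> R) (f tau g : T -> R).
Hypothesis tau_pm : forall x, tau x = 1 \/ tau x = -1.
Hypothesis tau_sw : forall x y, adj x y -> tau x * sigma x y * tau y = 1.
Hypothesis gE : forall x, g x = tau x * f x.

Lemma tau_mul_self x : tau x * tau x = 1.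
Proof. by case: (tau_pm x) => ->; lra. Qed.

Lemma sigma_switch a b : adj a b -> sigma a b = tau a * tau b.
Proof. by move/tau_sw; case: (tau_pm a) => ->; case: (tau_pm b) => ->; lra. Qed.

Lemma switched_eq0 x : (g x == 0) = (f x == 0).
Proof. by rewrite gE mulf_eq0; case: (tau_pm x) => ->; rewrite ?oppr_eq0 oner_eq0. Qed.

Lemma S_walk_switch x p :
  S_walk adj sigma f x p <->
  p != [::] /\ path [rel a b | adj a b && (0 < g a * g b)] x p.
Proof.
rewrite /S_walk (@eq_path _ _ [rel a b | adj a b && (0 < g a * g b)]) //.
move=> a b /=; case ab: (adj a b) => //=.
by rewrite (sigma_switch ab) !gE; congr (0 < _); ring.
Qed.

Lemma prod_sigma_switch x p i j :
  path adj x p -> (i <= j < size (x :: p))%N ->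
  \prod_(i <= l < j) sigma (nth x (x :: p) l) (nth x (x :: p) l.+1)
    = tau (nth x (x :: p) i) * tau (nth x (x :: p) j).
Proof.
move=> /(pathP x) pth; elim: j => [|j IHj] /andP[ij jlt].
  by move: ij; rewrite leqn0 => /eqP->; rewrite big_geq // tau_mul_self.
have [ilt | -> ] : (i < j.+1 \/ i = j.+1)%N by lia.
  have jp : (j < size p)%N := jlt.
  rewrite big_nat_recr //= IHj; last by rewrite -ltnS ilt ltnW.
  rewrite (sigma_switch (pth j jp)) -!mulrA; congr (_ * _).
  by rewrite mulrA tau_mul_self mul1r.
by rewrite big_geq // tau_mul_self.
Qed.

Lemma W_walk_switch x p :
  W_walk adj sigma f x p <->
  [/\ p != [::], path adj x p & {in x :: p &, forall u v, 0 <= g u * g v}].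
Proof.
rewrite /W_walk; set w := x :: p; pose G n := g (nth x w n).
have fG n : (f (nth x w n) != 0) = (G n != 0) by rewrite /G switched_eq0.
have segment_sign : path adj x p -> forall i j, (i < j < size w)%N ->
    f (nth x w i) * (\prod_(i <= l < j) sigma (nth x w l) (nth x w l.+1))
      * f (nth x w j) = G i * G j.
  move=> pth i j /andP[ij jlt]; rewrite prod_sigma_switch ?(ltnW ij) //.
  by rewrite /G !gE; ring.
split=> [[pn pth Wcons] | [pn pth Gpair]]; split=> //.
  have Gpos : forall i j, (i < j < size w)%N -> G i != 0 -> G j != 0 -> 0 < G i * G j.
    apply: consecutive_nonzero_mul_gt0 => i j ijw Gi Gj Gl; rewrite -segment_sign //.
    apply: Wcons; rewrite ?fG // => l /Gl /eqP.
    by rewrite /G switched_eq0 => /eqP.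
  move=> u v uw vw; rewrite -(nth_index x uw) -(nth_index x vw) -!/(G _).
  have [-> | Gu] := eqVneq (G (index u w)) 0; first by rewrite mul0r.
  have [-> | Gv] := eqVneq (G (index v w)) 0; first by rewrite mulr0.
  rewrite -index_mem in uw; rewrite -index_mem in vw.
  case: (ltngtP (index u w) (index v w)) => [uv | vu | ->].
  - by apply/ltW/Gpos; rewrite ?uv.
  - by rewrite mulrC; apply/ltW/Gpos; rewrite ?vu.
  - by rewrite -expr2 sqr_ge0.
move=> i j ijw fi fj _; rewrite segment_sign // lt_def mulf_neq0 -?fG //=.
by case/andP: ijw => ij jw; apply: Gpair; apply: mem_nth => //; apply: ltn_trans jw.
Qed.

Hypothesis adj_sym : symmetric adj.

Lemma RS_component x y :
  f x != 0 -> RS adj sigma f x y <-> y \in component adj (fun a => 0 < g x * g a) x.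
Proof.
set Q := fun a => 0 < g x * g a; move=> fx.
have Qx : Q x by rewrite /Q -expr2 exprn_even_gt0 // switched_eq0.
have sign_trans : transitive [rel a b | 0 < g a * g b].
  by move=> b a c; apply: mulr_gt0_trans.
split=> [[_ _ [<- | [p [/S_walk_switch[_ pth] <-]]]] | xy]; rewrite ?inE.
- exact: connect0.
- apply/connectP; exists p => //; move: pth; rewrite path_relI => /andP[pth sgn].
  by apply: path_induced => //=; rewrite Qx; move: sgn; rewrite path_sortedE // => /andP[].
split=> //.
  rewrite -switched_eq0; move: (component_pred Qx xy).
  by apply: contraTneq => gy0; rewrite /Q gy0 mulr0 ltxx.
move: xy; rewrite inE => /connectP[[|a p] pth ->]; [by left | right].
exists (a :: p); split=> //; apply/S_walk_switch; split=> //.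
apply: sub_path pth => u v /and3P[uv Qu Qv] /=; rewrite uv /=.
by apply: (@mulr_gt0_trans _ _ (g x)); rewrite // mulrC.
Qed.

Lemma W_walk_induced_path x z p v :
  W_walk adj sigma f z p -> v \in z :: p -> 0 < g x * g v ->
  path (induced_adj adj (fun a => 0 <= g x * g a)) z p.
Proof.
move=> /W_walk_switch[_ pth Gpair] vw xv; apply: path_induced => //.
by apply/allP => a aw; apply: (mulr_gt0_ge0_trans xv); apply: Gpair.
Qed.

Lemma induced_path_W_walk x z p :
  f x != 0 -> p != [::] -> 0 <= g x * g z ->
  path (induced_adj adj (fun a => 0 <= g x * g a)) z p -> W_walk adj sigma f z p.
Proof.
move=> fx pn xz pth; apply/W_walk_switch; split=> //.
  by apply: sub_path pth => a b /and3P[].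
have /allP Qw : all (fun a => 0 <= g x * g a) (z :: p) by rewrite /= xz (induced_path_all pth).
by move=> u v /Qw xu /Qw xv; apply: (mulr_ge0_pivot _ xu xv); rewrite switched_eq0.
Qed.

Lemma RW_component x y :
  f x != 0 ->
  RW adj sigma f x y <->
  f y != 0 /\ y \in component adj (fun a => 0 <= g x * g a) x.
Proof.
move=> fx; have xx : 0 < g x * g x by rewrite -expr2 exprn_even_gt0 // switched_eq0.
split=> [[_ fy xy] | [fy xy]].
  split=> //; rewrite inE; case: xy => [<- | [p [Wp <-]]]; first exact: connect0.
  by apply/connectP; exists p => //; apply: W_walk_induced_path Wp (mem_head x p) xx.
split=> //; move: xy; rewrite inE => /connectP[[|a p] pth ->]; [by left | right].
by exists (a :: p); split=> //; apply: induced_path_W_walk pth => //; apply: ltW xx.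
Qed.

Lemma W_closure_component x y :
  f x != 0 ->
  (RW adj sigma f x y \/
     exists p, W_walk adj sigma f y p /\ RW adj sigma f x (last y p)) <->
  y \in component adj (fun a => 0 <= g x * g a) x.
Proof.
set Q := fun a => 0 <= g x * g a; move=> fx.
have Qx : Q x by rewrite /Q -expr2 sqr_ge0.
split=> [[/RW_component[] // | [p [Wp /RW_component[// | fz xz]]]] | xy].
  have xz_gt0 : 0 < g x * g (last y p).
    by rewrite lt_def mulf_neq0 ?switched_eq0 //; exact: component_pred Qx xz.
  apply: component_trans xz (component_sym adj_sym _); rewrite inE.
  by apply/connectP; exists p => //; apply: W_walk_induced_path Wp (mem_last _ _) xz_gt0.
have [fy | fy0] := boolP (f y != 0); first by left; apply/RW_component.
right; move: (component_sym adj_sym xy); rewrite inE => /connectP[p pth xE].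
exists p; rewrite -xE; split; last by apply/RW_component; rewrite // inE connect0.
apply: induced_path_W_walk pth => //; last exact: component_pred Qx xy.
by apply: contraNneq fy0 => p0; move: fx; rewrite xE p0.
Qed.

Lemma strong_nodal_domain_switch S :
  strong_nodal_domain adj sigma f S <->
  exists2 x, g x != 0 & S = component adj (fun a => 0 < g x * g a) x.
Proof.
split=> [[x [fx Sx]] | [x gx ->]].
  exists x; first by rewrite switched_eq0.
  apply/setP => y; apply/idP/idP => [/Sx/(RS_component y fx) //|].
  by move=> /(RS_component y fx)/Sx.
rewrite switched_eq0 in gx; exists x; split=> // y; exact: iff_sym (RS_component y gx).
Qed.

Lemma weak_nodal_domain_switch S :
  weak_nodal_domain adj sigma f S <->
  exists2 x, g x != 0 & S = component adj (fun a => 0 <= g x * g a) x.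
Proof.
split=> [[x [fx Sx]] | [x gx ->]].
  exists x; first by rewrite switched_eq0.
  apply/setP => y; apply/idP/idP => [/Sx/(W_closure_component y fx) //|].
  by move=> /(W_closure_component y fx)/Sx.
rewrite switched_eq0 in gx; exists x; split=> // y; exact: iff_sym (W_closure_component y gx).
Qed.

End Switching.

Section UnsignedDomains.
Variables (R : realFieldType) (T : finType) (adj : rel T) (g : T -> R).
Hypothesis adj_sym : symmetric adj.

Lemma unsigned_strong_domain_component S :
  unsigned_strong_domain adj g S <->
  exists2 x, g x != 0 & S = component adj (fun a => 0 < g x * g a) x.
Proof.
split=> [[] /(maximal_connected_componentP adj_sym)[x gx ->] | [x gx ->]].
- by exists x; [rewrite gt_eqF | apply: eq_component => a; rewrite /= pmulr_rgt0].
- by exists x; [rewrite lt_eqF | apply: eq_component => a; rewrite /= nmulr_rgt0].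
have [gx_lt0 | gx_gt0 | gx0] := ltgtP (g x) 0; [right | left | by rewrite gx0 eqxx in gx].
all: apply/(maximal_connected_componentP adj_sym); exists x => //.
- by apply: eq_component => a; rewrite /= nmulr_rgt0.
- by apply: eq_component => a; rewrite /= pmulr_rgt0.
Qed.

Lemma unsigned_weak_domain_component S :
  unsigned_weak_domain adj g S <->
  exists2 x, g x != 0 & S = component adj (fun a => 0 <= g x * g a) x.
Proof.
split=> [[] [Smax [x [xS gx]]] | [x gx ->]].
- have gx_gt0 : 0 < g x by rewrite lt_def gx; have [SP _ _] := Smax; apply: SP.
  exists x; rewrite // (maximal_connected_component adj_sym Smax xS).
  by apply: eq_component => a; rewrite /= pmulr_rge0.
- have gx_lt0 : g x < 0 by rewrite lt_def eq_sym gx; have [SP _ _] := Smax; apply: SP.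
  exists x; rewrite // (maximal_connected_component adj_sym Smax xS).
  by apply: eq_component => a; rewrite /= nmulr_rge0.
have xx : x \in component adj (fun a => 0 <= g x * g a) x by rewrite inE connect0.
have [gx_lt0 | gx_gt0 | gx0] := ltgtP (g x) 0; [right | left | by rewrite gx0 eqxx in gx].
- split; last by exists x.
  rewrite (@eq_component _ _ _ (fun a => g a <= 0)); last by move=> a; rewrite /= nmulr_rge0.
  by apply: component_maximal; rewrite ?ltW.
- split; last by exists x.
  rewrite (@eq_component _ _ _ (fun a => 0 <= g a)); last by move=> a; rewrite /= pmulr_rge0.
  by apply: component_maximal; rewrite ?ltW.
Qed.

End UnsignedDomains.

Theorem corollary3p3 (R : realFieldType) (T : finType) (adj : rel T)
    (sigma : T -> T -> R) (f tau : T -> R)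
    (adj_sym : symmetric adj) (adj_irr : irreflexive adj)
    (sigma_sym : forall x y, adj x y -> sigma x y = sigma y x)
    (sigma_pm : forall x y, adj x y -> sigma x y = 1 \/ sigma x y = -1)
    (bal : balanced adj sigma)
    (f_nz : exists x, f x != 0)
    (tau_pm : forall x, tau x = 1 \/ tau x = -1)
    (tau_sw : forall x y, adj x y -> tau x * sigma x y * tau y = 1) :
  forall S : {set T},
    (strong_nodal_domain adj sigma f S <->
       unsigned_strong_domain adj (fun x => tau x * f x) S) /\
    (weak_nodal_domain adj sigma f S <->
       unsigned_weak_domain adj (fun x => tau x * f x) S).
Proof.
pose g x := tau x * f x; have gE : g =1 (fun x => tau x * f x) by [].
move=> S; split.
- apply: iff_trans (strong_nodal_domain_switch tau_pm tau_sw gE S) _.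
  exact: iff_sym (unsigned_strong_domain_component g adj_sym S).
- apply: iff_trans (weak_nodal_domain_switch tau_pm tau_sw gE adj_sym S) _.
  exact: iff_sym (unsigned_weak_domain_component g adj_sym S).
Qed.
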